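(* Let $k\ge0$, $n\ge1$ be integers and fix $\psi>0$. The $3$-dimensional first-order linear system $$\frac{\mathrm d}{\mathrm d\varphi}\mathbf g=\frac1\varphi\begin{pmatrix}0 & 2e^{-\varphi^2+2\varphi\psi}\varphi^{2(k+1)} & 0\\ 0&0&1\\ 0 & -2(2n-1)\varphi\psi & -[4\varphi\psi+2(n-1)]\end{pmatrix}\mathbf g$$ is stabile, as $\varphi\to\infty$, for its solution $\mathbf g(\varphi)=\big(H^k_n(\varphi^2,\psi^2),\ v(\varphi),\ \theta_\varphi\bullet v(\varphi)\big)^{\mathsf T}$, where $v(\varphi)=e^{-2\varphi\psi}\,{}_0F_1(;n;\varphi^2\psi^2)$.
   Context: ${}_0F_1(;n;z)=\sum_{i\ge0} \frac{z^i}{(n)_i\, i!}$ with $(a)_i$ the Pochhammer symbol. $H^k_n(x,\lambda)=\int_0^x y^{k}e^{-y}\,{}_0F_1(;n;\lambda y)\,\mathrm{d}y$. $\theta_\varphi=\varphi\frac{\mathrm d}{\mathrm d\varphi}$. Stabile: Let a first-order linear system in a variable $t$ have $m$-dimensional solution space with basis $f_1,\dots,f_m$ (vector-valued), and let $f_i$ be a dominant solution as $t\to\infty$, i.e. $\|f_i(t)\|\ge\|f_j(t)\|$ for all $j$ for large $t$. The system is called stabile for a particular solution $f$ (as $t\to\infty$) if $\lim_{t\to\infty}\|f_i(t)\|/\|f(t)\|<\infty$ (finite); this does not depend on the chosen basis. *)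

From Stdlib Require Import Reals Arith ClassicalEpsilon.
Open Scope R_scope.

Fixpoint poch (a : R) (i : nat) : R :=
  match i with
  | O => 1
  | S j => poch a j * (a + INR j)
  end.

Definition F01_term (n z : R) (i : nat) : R := z ^ i / (poch n i * INR (fact i)).
Definition F01 (n z : R) : R :=
  epsilon (inhabits 0) (fun l => infinite_sum (F01_term n z) l).

Definition integral (f : R -> R) (a b : R) : R :=
  epsilon (inhabits 0) (fun l => exists pr : Riemann_integrable f a b, RiemannInt pr = l).

Definition Hkn (k : nat) (n : R) (x lam : R) : R :=
  integral (fun y => y ^ k * exp (- y) * F01 n (lam * y)) 0 x.

Definition deriv (f : R -> R) (x : R) : R :=
  epsilon (inhabits 0) (fun l => derivable_pt_lim f x l).
Definition theta (f : R -> R) (x : R) : R := x * deriv f x.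

Definition V3 : Type := (R * R * R)%type.
Definition c1 (u : V3) : R := fst (fst u).
Definition c2 (u : V3) : R := snd (fst u).
Definition c3 (u : V3) : R := snd u.
Definition norm3 (u : V3) : R := sqrt (c1 u ^ 2 + c2 u ^ 2 + c3 u ^ 2).
Definition lin3 (a b c : R) (u v w : V3) : V3 :=
  (a * c1 u + b * c1 v + c * c1 w,
   a * c2 u + b * c2 v + c * c2 w,
   a * c3 u + b * c3 v + c * c3 w).

Definition is_solution (A : R -> V3 -> V3) (f : R -> V3) : Prop :=
  forall t, 0 < t ->
    derivable_pt_lim (fun s => c1 (f s)) t (c1 (A t (f t))) /\
    derivable_pt_lim (fun s => c2 (f s)) t (c2 (A t (f t))) /\
    derivable_pt_lim (fun s => c3 (f s)) t (c3 (A t (f t))).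

Definition is_basis (A : R -> V3 -> V3) (fb : nat -> R -> V3) : Prop :=
  (forall i, (i < 3)%nat -> is_solution A (fb i)) /\
  (forall a b c, (forall t, 0 < t -> lin3 a b c (fb 0%nat t) (fb 1%nat t) (fb 2%nat t) = (0,0,0)) ->
     a = 0 /\ b = 0 /\ c = 0) /\
  (forall g, is_solution A g -> exists a b c,
     forall t, 0 < t -> g t = lin3 a b c (fb 0%nat t) (fb 1%nat t) (fb 2%nat t)).

Definition dominant (fb : nat -> R -> V3) (i : nat) : Prop :=
  exists T, forall t, T < t -> forall j, (j < 3)%nat -> norm3 (fb j t) <= norm3 (fb i t).

Definition finite_limit_at_infty (h : R -> R) : Prop :=
  exists L, forall eps, 0 < eps -> exists T, forall t, T < t -> Rabs (h t - L) < eps.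

Definition stabile (A : R -> V3 -> V3) (f : R -> V3) : Prop :=
  (exists fb i, is_basis A fb /\ (i < 3)%nat /\ dominant fb i) /\
  (forall fb i, is_basis A fb -> (i < 3)%nat -> dominant fb i ->
     finite_limit_at_infty (fun t => norm3 (fb i t) / norm3 (f t))).

Definition sysA (k n : nat) (psi : R) (phi : R) (g : V3) : V3 :=
  ( / phi * (2 * exp (- phi ^ 2 + 2 * phi * psi) * phi ^ (2 * (k + 1)) * c2 g),
    / phi * c3 g,
    / phi * (- 2 * (2 * INR n - 1) * phi * psi * c2 g
             - (4 * phi * psi + 2 * (INR n - 1)) * c3 g)).

Definition vfun (n : nat) (psi : R) (phi : R) : R :=
  exp (- 2 * phi * psi) * F01 (INR n) (phi ^ 2 * psi ^ 2).

Definition gsol (k n : nat) (psi : R) (phi : R) : V3 :=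
  (Hkn k (INR n) (phi ^ 2) (psi ^ 2), vfun n psi phi, theta (vfun n psi) phi).

(* With [w(t) = 2 e^{-t^2 + 2 t psi} t^{2k+1}] the system reads [g1' = w g2], [g2' = g3 / t],
   [g3' = -2(2n-1) psi g2 - (4 psi + 2(n-1)/t) g3].  The pair [(g2, g3)] is damped: [2(2n-1) psi g2^2 + g3^2/t]
   decreases, the fast combination [g3 + (2n-1)/2 g2] is damped at rate [4 psi], and then both [g2] and
   [g3] tend to [0].  Since [w] decays like [e^{-t}], [g1] converges, so the norm of every solution
   converges to [|lim g1|].  For the given solution [g1 = H^k_n(t^2, psi^2)] increases to a positive
   limit, hence [|f(t)| / |g(t)|] converges for every solution [f].  A basis with a dominant member is
   [(M, 0, 0)], [g] and a second solution built from [v] by reduction of order, with [M] above the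
   limits of the other two norms; it spans because solutions vanishing at [t = 1] vanish (Gronwall). *)

From Coquelicot Require Import Coquelicot.
From Stdlib Require Import Reals Arith Lra Lia Psatz ClassicalEpsilon FunctionalExtensionality Classical.
Open Scope R_scope.

Lemma nonincreasing_of_derive_nonpos (f f' : R -> R) a b : a <= b ->
  (forall c, a <= c <= b -> derivable_pt_lim f c (f' c)) ->
  (forall c, a <= c <= b -> f' c <= 0) -> f b <= f a.
Proof.
  intros hab hd hn. destruct (Rle_lt_or_eq_dec _ _ hab) as [h|<-]; [|lra].
  destruct (MVT_cor2 f f' a b h hd) as [c [e hc]].
  assert (f' c <= 0) by (apply hn; lra). nra.
Qed.

Lemma derivable_pt_lim_sq (f : R -> R) t l :
  derivable_pt_lim f t l -> derivable_pt_lim (fun s => f s ^ 2) t (2 * l * f t).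
Proof.
  intro h. apply is_derive_Reals. apply is_derive_Reals in h.
  replace (2 * l * f t) with (INR 2 * l * f t ^ Nat.pred 2) by (simpl; ring).
  now apply (is_derive_pow f 2 t l).
Qed.

Lemma is_derive_RInt_pos (f : R -> R) a t :
  (forall s, 0 < s -> continuous f s) -> 0 < a -> 0 < t ->
  is_derive (fun x => RInt f a x) t (f t).
Proof.
  intros hc ha ht. apply (is_derive_RInt f _ a); [|now apply hc].
  assert (hp : 0 < t / 2) by lra.
  exists (mkposreal _ hp). intros y hy. apply (@RInt_correct R_CompleteNormedModule).
  apply ex_RInt_continuous. intros z hz. apply hc.
  unfold ball in hy; simpl in hy; unfold AbsRing_ball, abs, minus, plus, opp in hy; simpl in hy.
  apply Rabs_def2 in hy. assert (0 < Rmin a y) by (apply Rmin_glb_lt; lra).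
  destruct hz; lra.
Qed.

Lemma is_derive_RInt_continuous (f : R -> R) a t :
  (forall s, continuous f s) -> is_derive (fun x => RInt f a x) t (f t).
Proof.
  intro hc. apply (is_derive_RInt f _ a); [|apply hc].
  exists (mkposreal _ Rlt_0_1). intros y _. apply (@RInt_correct R_CompleteNormedModule).
  apply ex_RInt_continuous. intros; apply hc.
Qed.

(* [E e^{-K s}] decreases to the right of [a] and [E e^{K s}] increases to its left. *)
Lemma gronwall_zero (E E' : R -> R) K lo hi a t :
  lo <= a <= hi -> lo <= t <= hi ->
  (forall s, lo <= s <= hi -> derivable_pt_lim E s (E' s)) ->
  (forall s, lo <= s <= hi -> Rabs (E' s) <= K * E s) ->
  0 <= E t -> E a = 0 -> E t = 0.
Proof.
  intros ha ht hd hb hEt hEa.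
  assert (hexp : forall c s, derivable_pt_lim (fun s => exp (c * s)) s (c * exp (c * s))).
  { intros c s. apply is_derive_Reals. auto_derive; auto; ring. }
  destruct (Rle_dec a t) as [hat|hta].
  - assert (hm : E t * exp (- K * t) <= E a * exp (- K * a)).
    { apply (nonincreasing_of_derive_nonpos (fun s => E s * exp (- K * s))
        (fun s => E' s * exp (- K * s) + E s * (- K * exp (- K * s))) a t hat).
      - intros c hc. apply (derivable_pt_lim_mult E (fun s => exp (- K * s)));
          [apply hd; lra | apply (hexp (- K))].
      - intros c hc. specialize (hb c ltac:(lra)). pose proof (exp_pos (- K * c)).
        pose proof (Rle_abs (E' c)). nra. }
    rewrite hEa in hm. pose proof (exp_pos (- K * t)). nra.
  - assert (hm : - (E a * exp (K * a)) <= - (E t * exp (K * t))).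
    { apply (nonincreasing_of_derive_nonpos (fun s => - (E s * exp (K * s)))
        (fun s => - (E' s * exp (K * s) + E s * (K * exp (K * s)))) t a); [lra| |].
      - intros c hc. apply (derivable_pt_lim_opp (fun s => E s * exp (K * s))).
        apply (derivable_pt_lim_mult E (fun s => exp (K * s))); [apply hd; lra | apply hexp].
      - intros c hc. specialize (hb c ltac:(lra)). pose proof (exp_pos (K * c)).
        pose proof (Rle_abs (- E' c)). rewrite Rabs_Ropp in *. nra. }
    rewrite hEa in hm. pose proof (exp_pos (K * t)). nra.
Qed.

Lemma derive_neg_left_gt (f : R -> R) m l a : derivable_pt_lim f m l -> l < 0 -> a < m ->
  exists s, a <= s < m /\ f m < f s.
Proof.
  intros hd hl ha. destruct (hd (- l / 2) ltac:(lra)) as [[d hd0] hdd]; simpl in hdd.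
  set (h := - Rmin (d / 2) ((m - a) / 2)).
  assert (hpos : 0 < Rmin (d / 2) ((m - a) / 2)) by (apply Rmin_glb_lt; lra).
  pose proof (Rmin_l (d / 2) ((m - a) / 2)). pose proof (Rmin_r (d / 2) ((m - a) / 2)).
  assert (hh2 : Rabs h < d) by (unfold h; rewrite Rabs_Ropp, Rabs_pos_eq; lra).
  specialize (hdd h ltac:(unfold h; lra) hh2). apply Rabs_def2 in hdd.
  exists (m + h). split; [unfold h; lra|].
  assert (hneg : / h < 0) by (apply Rinv_lt_0_compat; unfold h; lra).
  unfold Rdiv in hdd. nra.
Qed.

Lemma exists_lt_of_derive_le_neg_inv (f f' : R -> R) T d K : 0 < T -> 0 < K ->
  (forall t, T < t -> derivable_pt_lim f t (f' t)) ->
  (forall t, T < t -> d <= f t -> f' t <= - K / t) ->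
  exists t1, T < t1 /\ f t1 < d.
Proof.
  intros hT hK hd hn. apply NNPP. intro hno.
  assert (hall : forall t, T < t -> d <= f t).
  { intros t ht. apply Rnot_lt_le. intro hc. apply hno. exists t; auto. }
  set (t0 := T + 1).
  set (X := (f t0 + K * ln t0 - d) / K + 1).
  set (t := Rmax (t0 + 1) (exp X)).
  assert (ht0 : t0 + 1 <= t) by apply Rmax_l.
  assert (hlnt : X <= ln t).
  { rewrite <- (ln_exp X). apply ln_le; [apply exp_pos | apply Rmax_r]. }
  (* [f + K ln] is nonincreasing, while [ln] is unbounded *)
  assert (hm : f t + K * ln t <= f t0 + K * ln t0).
  { apply (nonincreasing_of_derive_nonpos (fun s => f s + K * ln s) (fun s => f' s + K * / s));
      [unfold t0 in *; lra| |].
    - intros c hc. apply derivable_pt_lim_plus; [apply hd; unfold t0 in *; lra|].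
      apply derivable_pt_lim_scal, derivable_pt_lim_ln. unfold t0 in *; lra.
    - intros c hc. assert (hc0 : T < c) by (unfold t0 in *; lra).
      specialize (hn c hc0 (hall c hc0)). unfold Rdiv in hn. lra. }
  assert (hft : d <= f t) by (apply hall; unfold t0 in *; lra).
  assert (hKX : K * X <= K * ln t) by (apply Rmult_le_compat_l; lra).
  replace (K * X) with (f t0 + K * ln t0 - d + K) in hKX by (unfold X; field; lra).
  lra.
Qed.

Lemma le_of_lt_of_derive_neg (f f' : R -> R) t1 d :
  f t1 < d ->
  (forall t, t1 <= t -> derivable_pt_lim f t (f' t)) ->
  (forall t, t1 < t -> d <= f t -> f' t < 0) ->
  forall t, t1 <= t -> f t <= d.
Proof.
  intros hf1 hd hn t ht. apply Rnot_lt_le. intro hc.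
  (* at a maximum point of [f] on [t1, t] the derivative cannot be negative *)
  destruct (continuity_ab_maj f t1 t) as [m [hmax hm]]; [lra| |].
  { intros c hc'. apply derivable_continuous_pt. exists (f' c). apply hd. lra. }
  assert (hfm : f t <= f m) by (apply hmax; lra).
  destruct (Rle_lt_or_eq_dec _ _ (proj1 hm)) as [hm1|<-]; [|lra].
  destruct (derive_neg_left_gt f m (f' m) t1) as [s [hs1 hs2]]; auto.
  - apply hd; lra.
  - apply hn; lra.
  - assert (f s <= f m) by (apply hmax; lra). lra.
Qed.

Lemma eventually_le_of_derive_le_neg_inv (f f' : R -> R) T d K : 0 < T -> 0 < K ->
  (forall t, T < t -> derivable_pt_lim f t (f' t)) ->
  (forall t, T < t -> d <= f t -> f' t <= - K / t) ->
  exists T', forall t, T' < t -> f t <= d.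
Proof.
  intros hT hK hd hn.
  destruct (exists_lt_of_derive_le_neg_inv f f' T d K hT hK hd hn) as [t1 [ht1 hf1]].
  exists t1. intros t ht. apply (le_of_lt_of_derive_neg f f' t1); [exact hf1| | |lra].
  - intros s hs; apply hd; lra.
  - intros s hs hfs. specialize (hn s ltac:(lra) hfs).
    assert (0 < K / s) by (apply Rdiv_lt_0_compat; lra). lra.
Qed.

Definition tends_to_at_infty (f : R -> R) (L : R) : Prop :=
  forall eps, 0 < eps -> exists T, forall t, T < t -> Rabs (f t - L) < eps.

Lemma tends_to_at_infty_is_lim f L : tends_to_at_infty f L -> is_lim f p_infty L.
Proof.
  intro h. apply is_lim_spec. intros eps. destruct (h eps (cond_pos eps)) as [T hT].
  exists T. intros t ht. apply hT, ht.
Qed.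

Lemma is_lim_tends_to_at_infty f L : is_lim f p_infty (Finite L) -> tends_to_at_infty f L.
Proof.
  intro h. apply is_lim_spec in h. intros eps he. destruct (h (mkposreal eps he)) as [T hT].
  exists T. intros t ht. apply (hT t ht).
Qed.

Lemma tends_to_at_infty_0_of_sq (f : R -> R) :
  (forall eps, 0 < eps -> exists T, forall t, T < t -> f t ^ 2 <= eps) ->
  tends_to_at_infty f 0.
Proof.
  intros h eps he. destruct (h (eps ^ 2 / 2)) as [T hT]; [nra|]. exists T. intros t ht.
  specialize (hT t ht). rewrite Rminus_0_r, <- (Rabs_pos_eq eps) by lra.
  apply Rsqr_lt_abs_0. unfold Rsqr. nra.
Qed.

Lemma tends_to_at_infty_of_nondecreasing (l : R -> R) T0 B :
  (forall s t, T0 <= s <= t -> l s <= l t) -> (forall t, T0 <= t -> l t <= B) ->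
  exists L, tends_to_at_infty l L.
Proof.
  intros hl hB.
  set (Ez v := exists t, T0 <= t /\ v = l t).
  assert (hbd : bound Ez) by (exists B; intros v [t [ht ->]]; now apply hB).
  assert (hne : exists v, Ez v) by (exists (l T0), T0; split; [lra | reflexivity]).
  destruct (completeness Ez hbd hne) as [L [hL1 hL2]].
  exists L. intros eps he.
  assert (hex : exists t0, T0 <= t0 /\ L - eps < l t0).
  { apply NNPP. intro hno. assert (L <= L - eps); [|lra].
    apply hL2. intros v [t [ht ->]]. apply Rnot_lt_le. intro hc. apply hno. now exists t. }
  destruct hex as [t0 [ht0 hlt0]].
  exists t0. intros t ht.
  assert (l t <= L) by (apply hL1; exists t; split; [lra | reflexivity]).
  assert (l t0 <= l t) by (apply hl; lra).
  apply Rabs_def1; lra.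
Qed.

(* [f - C e^{-t}] increases and is bounded by [f + C e^{-t}], which decreases. *)
Lemma tends_to_at_infty_of_derive_le_exp (f f' : R -> R) T0 C : 0 <= C ->
  (forall t, T0 <= t -> derivable_pt_lim f t (f' t)) ->
  (forall t, T0 <= t -> Rabs (f' t) <= C * exp (- t)) ->
  exists L, tends_to_at_infty f L.
Proof.
  intros hC hd hb.
  assert (hexp : forall s, derivable_pt_lim (fun s => exp (- s)) s (- exp (- s))).
  { intro s. apply is_derive_Reals. auto_derive; auto; ring. }
  set (l t := f t - C * exp (- t)). set (u t := f t + C * exp (- t)).
  assert (hl : forall s t, T0 <= s <= t -> l s <= l t).
  { intros s t hst. assert (- l t <= - l s); [|lra].
    apply (nonincreasing_of_derive_nonpos (fun t => - l t) (fun t => - (f' t - C * (- exp (- t)))) s t);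
      [lra| |].
    - intros c hc. apply derivable_pt_lim_opp, derivable_pt_lim_minus; [apply hd; lra|].
      apply derivable_pt_lim_scal, hexp.
    - intros c hc. specialize (hb c ltac:(lra)). apply Rabs_le_between in hb. lra. }
  assert (hu : forall t, T0 <= t -> u t <= u T0).
  { intros t ht.
    apply (nonincreasing_of_derive_nonpos u (fun t => f' t + C * (- exp (- t))) T0 t); [lra| |].
    - intros c hc. apply derivable_pt_lim_plus; [apply hd; lra|].
      apply derivable_pt_lim_scal, hexp.
    - intros c hc. specialize (hb c ltac:(lra)). apply Rabs_le_between in hb. lra. }
  destruct (tends_to_at_infty_of_nondecreasing l T0 (u T0) hl) as [L hL].
  { intros t ht. apply Rle_trans with (u t); [|now apply hu]. unfold l, u. pose proof (exp_pos (- t)). nra. }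
  exists L. intros eps he.
  destruct (hL (eps / 2) ltac:(lra)) as [T hT].
  exists (Rmax T (Rmax 0 (2 * C / eps))). intros t ht.
  pose proof (Rmax_l T (Rmax 0 (2 * C / eps))). pose proof (Rmax_r T (Rmax 0 (2 * C / eps))).
  pose proof (Rmax_l 0 (2 * C / eps)). pose proof (Rmax_r 0 (2 * C / eps)).
  assert (hexpt : C * exp (- t) < eps / 2).
  { pose proof (exp_ineq1_le t). rewrite exp_Ropp.
    apply Rmult_lt_reg_r with (exp t); [apply exp_pos|].
    replace (C * / exp t * exp t) with C by (field; pose proof (exp_pos t); lra).
    assert (hCe : 2 * C / eps < exp t) by lra.
    apply Rmult_lt_compat_r with (r := eps / 2) in hCe; [|lra].
    replace (2 * C / eps * (eps / 2)) with C in hCe by (field; lra). lra. }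
  specialize (hT t ltac:(lra)). pose proof (exp_pos (- t)).
  replace (f t - L) with ((l t - L) + C * exp (- t)) by (unfold l; ring).
  apply Rabs_def2 in hT. apply Rabs_def1; nra.
Qed.

Lemma pow_le_fact_exp t m : 0 <= t -> t ^ m <= INR (fact m) * exp t.
Proof.
  intro ht. pose proof (exp_ge_taylor t m ht) as hs.
  assert (hm : t ^ m / INR (fact m) <= sum_f_R0 (fun j => t ^ j / INR (fact j)) m).
  { destruct m as [|m]; [simpl; lra|]. rewrite tech5.
    assert (0 <= sum_f_R0 (fun j => t ^ j / INR (fact j)) m); [|lra].
    apply cond_pos_sum. intro j. apply Rdiv_le_0_compat; [now apply pow_le | apply INR_fact_lt_0]. }
  pose proof (INR_fact_lt_0 m).
  apply Rmult_le_reg_r with (/ INR (fact m)); [now apply Rinv_0_lt_compat|].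
  replace (INR (fact m) * exp t * / INR (fact m)) with (exp t) by (field; lra). exact (Rle_trans _ _ _ hm hs).
Qed.

Lemma mul_le_of_sq_le u z b : 0 <= b -> u ^ 2 <= (b * z) ^ 2 -> u * z <= b * z ^ 2.
Proof.
  intros hb h. assert (hu : Rabs u <= b * Rabs z).
  { rewrite <- (Rabs_pos_eq b) by lra. rewrite <- Rabs_mult. apply Rsqr_le_abs_0. unfold Rsqr. nra. }
  pose proof (Rle_abs (u * z)). rewrite Rabs_mult in *.
  assert (Rabs z * Rabs z = z ^ 2)
    by (rewrite <- Rabs_mult; simpl; rewrite Rmult_1_r; apply Rabs_pos_eq; nra).
  pose proof (Rabs_pos z). nra.
Qed.

Definition F01_coef (p : R) (i : nat) : R := / (poch p i * INR (fact i)).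

Lemma poch_pos p i : 0 < p -> 0 < poch p i.
Proof.
  intro hp; induction i as [|i IH]; simpl; [lra|].
  apply Rmult_lt_0_compat; auto. pose proof (pos_INR i); lra.
Qed.

Lemma F01_coef_pos p i : 0 < p -> 0 < F01_coef p i.
Proof.
  intro hp. apply Rinv_0_lt_compat, Rmult_lt_0_compat; [now apply poch_pos | apply INR_fact_lt_0].
Qed.

Lemma F01_coef_S p i : 0 < p -> F01_coef p (S i) = F01_coef p i / ((p + INR i) * INR (S i)).
Proof.
  intro hp; unfold F01_coef; simpl poch. rewrite fact_simpl, mult_INR.
  pose proof (poch_pos p i hp). pose proof (INR_fact_lt_0 i). pose proof (pos_INR i).
  rewrite S_INR. field. repeat split; lra.
Qed.

Lemma CV_radius_F01_coef p : 0 < p -> CV_radius (F01_coef p) = p_infty.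
Proof.
  intro hp. apply CV_radius_infinite_DAlembert.
  - intro i; pose proof (F01_coef_pos p i hp); lra.
  - apply is_lim_seq_le_le with (u := fun _ => 0) (w := fun i => / p * / INR (S i)).
    + intro i. rewrite F01_coef_S by lra. pose proof (F01_coef_pos p i hp).
      pose proof (pos_INR i). rewrite S_INR.
      replace (F01_coef p i / ((p + INR i) * (INR i + 1)) / F01_coef p i)
        with (/ ((p + INR i) * (INR i + 1))) by (field; repeat split; lra).
      rewrite Rabs_pos_eq by (left; apply Rinv_0_lt_compat; nra).
      split; [left; apply Rinv_0_lt_compat; nra|].
      rewrite <- Rinv_mult. apply Rinv_le_contravar; nra.
    + apply is_lim_seq_const.
    + replace (Finite 0) with (Rbar_mult (/ p) 0) by (simpl; f_equal; ring).
      apply is_lim_seq_scal_l. apply (is_lim_seq_incr_1 (fun i => / INR i)).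
      replace (Finite 0) with (Rbar_inv p_infty) by reflexivity.
      apply is_lim_seq_inv; [apply is_lim_seq_INR | discriminate].
Qed.

Lemma F01_coef_inside p z : 0 < p -> Rbar_lt (Rabs z) (CV_radius (F01_coef p)).
Proof. intro hp; rewrite CV_radius_F01_coef by exact hp; exact I. Qed.

Lemma F01_PSeries p : 0 < p -> F01 p = PSeries (F01_coef p).
Proof.
  intro hp. apply functional_extensionality. intro z.
  assert (hs : infinite_sum (F01_term p z) (PSeries (F01_coef p) z)).
  { apply is_series_Reals. apply is_series_ext with (fun i => F01_coef p i * z ^ i).
    - intro i; unfold F01_term, F01_coef, Rdiv. apply Rmult_comm.
    - apply is_pseries_R, PSeries_correct, CV_radius_inside, F01_coef_inside, hp. }
  apply (uniqueness_sum (F01_term p z)); [|exact hs].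
  apply (epsilon_spec (inhabits 0) (fun l => infinite_sum (F01_term p z) l)).
  exists (PSeries (F01_coef p) z); exact hs.
Qed.

Lemma PSeries_ge_const_coef (a : nat -> R) z : (forall i, 0 <= a i) -> 0 <= z ->
  Rbar_lt (Rabs z) (CV_radius a) -> a 0%nat <= PSeries a z.
Proof.
  intros ha hz hr. apply CV_radius_inside, ex_pseries_R in hr.
  unfold PSeries. rewrite Series_incr_1 by exact hr. simpl.
  assert (0 <= Series (fun i => a (S i) * (z * z ^ i))); [|lra].
  assert (h0 : Series (fun _ : nat => 0) = 0).
  { transitivity (Series (fun _ : nat => 0 * 0)); [apply Series_ext; intro; ring|].
    rewrite Series_scal_l. ring. }
  rewrite <- h0.
  apply Series_le; [|now apply ex_series_incr_1 in hr].
  intro i; split; [lra|]. apply Rmult_le_pos; [apply ha | exact (pow_le z (S i) hz)].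
Qed.

Lemma F01_ge_1 p z : 0 < p -> 0 <= z -> 1 <= F01 p z.
Proof.
  intros hp hz. rewrite F01_PSeries by exact hp.
  replace 1 with (F01_coef p 0) by (unfold F01_coef; simpl; field).
  apply PSeries_ge_const_coef; [|exact hz | now apply F01_coef_inside].
  intro i; left; now apply F01_coef_pos.
Qed.

Definition F01' (p : R) : R -> R := PSeries (PS_derive (F01_coef p)).
Definition F01'' (p : R) : R -> R := PSeries (PS_derive (PS_derive (F01_coef p))).

Lemma is_derive_F01 p z : 0 < p -> is_derive (F01 p) z (F01' p z).
Proof. intro hp. rewrite F01_PSeries by exact hp. apply is_derive_PSeries, F01_coef_inside, hp. Qed.

Lemma is_derive_F01' p z : 0 < p -> is_derive (F01' p) z (F01'' p z).
Proof. intro hp. apply is_derive_PSeries. rewrite CV_radius_derive. apply F01_coef_inside, hp. Qed.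

Lemma F01_ode p z : 0 < p -> z * F01'' p z + p * F01' p z = F01 p z.
Proof.
  intro hp. rewrite F01_PSeries by exact hp. unfold F01', F01''.
  assert (e1 : ex_pseries (PS_derive (PS_derive (F01_coef p))) z).
  { apply CV_radius_inside. rewrite !CV_radius_derive. apply F01_coef_inside, hp. }
  assert (e2 : ex_pseries (PS_derive (F01_coef p)) z).
  { apply CV_radius_inside. rewrite !CV_radius_derive. apply F01_coef_inside, hp. }
  rewrite <- PSeries_incr_1, <- PSeries_scal, <- PSeries_plus.
  2: apply ex_pseries_incr_1, e1.
  2: { apply ex_pseries_scal; [apply Rmult_comm | exact e2]. }
  apply PSeries_ext. intro i. unfold PS_plus, PS_scal, PS_incr_1, PS_derive.
  destruct i as [|i].
  - simpl. unfold zero, plus, scal; simpl. unfold mult; simpl.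
    rewrite (F01_coef_S p 0) by lra. simpl. field. lra.
  - change (INR (S i) * (INR (S (S i)) * F01_coef p (S (S i)))
      + p * (INR (S (S i)) * F01_coef p (S (S i))) = F01_coef p (S i)).
    rewrite (F01_coef_S p (S i)) by lra. rewrite !S_INR.
    pose proof (pos_INR i). pose proof (F01_coef_pos p (S i) hp).
    field. repeat split; lra.
Qed.

Definition has_derivative3 (g : R -> V3) (t : R) (u : V3) : Prop :=
  derivable_pt_lim (fun s => c1 (g s)) t (c1 u) /\
  derivable_pt_lim (fun s => c2 (g s)) t (c2 u) /\
  derivable_pt_lim (fun s => c3 (g s)) t (c3 u).

Lemma has_derivative3_lin3 a b c f1 f2 f3 t u1 u2 u3 :
  has_derivative3 f1 t u1 -> has_derivative3 f2 t u2 -> has_derivative3 f3 t u3 ->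
  has_derivative3 (fun s => lin3 a b c (f1 s) (f2 s) (f3 s)) t (lin3 a b c u1 u2 u3).
Proof.
  assert (hlin : forall (f g h : R -> R) l1 l2 l3,
    derivable_pt_lim f t l1 -> derivable_pt_lim g t l2 -> derivable_pt_lim h t l3 ->
    derivable_pt_lim (fun s => a * f s + b * g s + c * h s) t (a * l1 + b * l2 + c * l3)).
  { intros f g h l1 l2 l3 h1 h2 h3.
    repeat apply derivable_pt_lim_plus; now apply derivable_pt_lim_scal. }
  intros [h11 [h12 h13]] [h21 [h22 h23]] [h31 [h32 h33]].
  unfold has_derivative3, lin3, c1, c2, c3 in *; simpl in *. auto.
Qed.

Definition sqnorm3 (u : V3) : R := c1 u ^ 2 + c2 u ^ 2 + c3 u ^ 2.

Lemma has_derivative3_sqnorm3 g t u : has_derivative3 g t u ->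
  derivable_pt_lim (fun s => sqnorm3 (g s)) t (2 * (c1 (g t) * c1 u + c2 (g t) * c2 u + c3 (g t) * c3 u)).
Proof.
  intros [h1 [h2 h3]]. unfold sqnorm3.
  replace (2 * (c1 (g t) * c1 u + c2 (g t) * c2 u + c3 (g t) * c3 u))
    with (2 * c1 u * c1 (g t) + 2 * c2 u * c2 (g t) + 2 * c3 u * c3 (g t)) by ring.
  repeat apply derivable_pt_lim_plus; now apply derivable_pt_lim_sq.
Qed.

Lemma sqnorm3_nonneg u : 0 <= sqnorm3 u.
Proof.
  unfold sqnorm3. pose proof (pow2_ge_0 (c1 u)). pose proof (pow2_ge_0 (c2 u)). pose proof (pow2_ge_0 (c3 u)).
  lra.
Qed.

Lemma sqnorm3_eq_0 u : sqnorm3 u = 0 -> u = (0, 0, 0).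
Proof.
  destruct u as [[x y] z]. unfold sqnorm3, c1, c2, c3; simpl. intro h.
  pose proof (pow2_ge_0 x). pose proof (pow2_ge_0 y). pose proof (pow2_ge_0 z).
  assert (x = 0) by nra. assert (y = 0) by nra. assert (z = 0) by nra. now subst.
Qed.

Definition weight (k : nat) (psi t : R) : R := 2 * exp (- t ^ 2 + 2 * t * psi) * t ^ (2 * k + 1).

Lemma sysA_eq k n psi t g : 0 < t ->
  sysA k n psi t g = (weight k psi t * c2 g, c3 g / t,
    - 2 * (2 * INR n - 1) * psi * c2 g - (4 * psi + 2 * (INR n - 1) / t) * c3 g).
Proof.
  intro ht. unfold sysA, weight.
  replace (2 * (k + 1))%nat with (S (2 * k + 1)) by lia. simpl pow.
  f_equal; [f_equal|]; field; lra.
Qed.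

Lemma sysA_lin3 k n psi t a b c u v w :
  sysA k n psi t (lin3 a b c u v w) = lin3 a b c (sysA k n psi t u) (sysA k n psi t v) (sysA k n psi t w).
Proof. unfold sysA, lin3, c1, c2, c3; simpl. f_equal; [f_equal|]; ring. Qed.

Lemma is_solution_lin3 A a b c f1 f2 f3 :
  (forall t a b c u v w, A t (lin3 a b c u v w) = lin3 a b c (A t u) (A t v) (A t w)) ->
  is_solution A f1 -> is_solution A f2 -> is_solution A f3 ->
  is_solution A (fun t => lin3 a b c (f1 t) (f2 t) (f3 t)).
Proof.
  intros hA h1 h2 h3 t ht. rewrite hA. now apply has_derivative3_lin3; [apply h1 | apply h2 | apply h3].
Qed.

Lemma is_solution_sysA_const k n psi M : is_solution (sysA k n psi) (fun _ => (M, 0, 0)).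
Proof.
  intros t ht. rewrite sysA_eq by exact ht. unfold c1, c2, c3; simpl.
  replace (weight k psi t * 0) with 0 by ring. replace (0 / t) with 0 by (field; lra).
  replace (- 2 * (2 * INR n - 1) * psi * 0 - (4 * psi + 2 * (INR n - 1) / t) * 0) with 0 by ring.
  repeat split; apply derivable_pt_lim_const.
Qed.

(* The last two equations of the system say that [g2] solves
   [v'' + ((2n-1)/t + 4 psi) v' + 2 (2n-1) psi / t v = 0] with [g3 = t v']. *)
Lemma is_solution_sysA_of_ode k n psi (G v v' v'' : R -> R) :
  (forall t, 0 < t -> is_derive G t (weight k psi t * v t)) ->
  (forall t, 0 < t -> is_derive v t (v' t)) ->
  (forall t, 0 < t -> is_derive v' t (v'' t)) ->
  (forall t, 0 < t -> v'' t + ((2 * INR n - 1) / t + 4 * psi) * v' t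
                      + 2 * (2 * INR n - 1) * psi / t * v t = 0) ->
  is_solution (sysA k n psi) (fun t => (G t, v t, t * v' t)).
Proof.
  intros hG hv hv' hode t ht. rewrite sysA_eq by exact ht. unfold c1, c2, c3; simpl.
  split; [|split]; apply is_derive_Reals.
  - now apply hG.
  - replace (t * v' t / t) with (v' t) by (field; lra). now apply hv.
  - assert (hd : is_derive (fun s => s * v' s) t (plus (mult one (v' t)) (mult t (v'' t)))).
    { apply (is_derive_mult (fun s => s) v');
        [apply (@is_derive_id R_AbsRing) | now apply hv' | intros; apply Rmult_comm]. }
    unfold plus, mult, one in hd; simpl in hd.
    replace (- 2 * (2 * INR n - 1) * psi * v t - (4 * psi + 2 * (INR n - 1) / t) * (t * v' t))
      with (1 * v' t + t * v'' t); [exact hd|].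
    apply Rmult_eq_reg_l with (/ t); [|apply Rinv_neq_0_compat; lra].
    rewrite <- (Rminus_0_r (v'' t)), <- (hode t ht). field. lra.
Qed.

Lemma abs_scal_two_mul_le c u v : Rabs (c * (2 * u * v)) <= Rabs c * (u ^ 2 + v ^ 2).
Proof.
  rewrite Rabs_mult. apply Rmult_le_compat_l; [apply Rabs_pos|].
  pose proof (pow2_ge_0 (u - v)). pose proof (pow2_ge_0 (u + v)). apply Rabs_le. split; nra.
Qed.

Lemma abs_quadratic_form_le x y z w i a b :
  Rabs (2 * (x * (w * y) + y * (i * z) + z * (a * y + b * z)))
  <= (Rabs w + Rabs i + Rabs a + 2 * Rabs b) * (x ^ 2 + y ^ 2 + z ^ 2).
Proof.
  replace (2 * (x * (w * y) + y * (i * z) + z * (a * y + b * z)))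
    with (w * (2 * x * y) + i * (2 * y * z) + a * (2 * y * z) + b * (2 * z * z)) by ring.
  pose proof (abs_scal_two_mul_le w x y). pose proof (abs_scal_two_mul_le i y z).
  pose proof (abs_scal_two_mul_le a y z). pose proof (abs_scal_two_mul_le b z z).
  pose proof (Rabs_triang (w * (2 * x * y) + i * (2 * y * z) + a * (2 * y * z)) (b * (2 * z * z))).
  pose proof (Rabs_triang (w * (2 * x * y) + i * (2 * y * z)) (a * (2 * y * z))).
  pose proof (Rabs_triang (w * (2 * x * y)) (i * (2 * y * z))).
  pose proof (Rabs_pos w). pose proof (Rabs_pos i). pose proof (Rabs_pos a). pose proof (Rabs_pos b).
  pose proof (pow2_ge_0 x). pose proof (pow2_ge_0 y). pose proof (pow2_ge_0 z).
  nra.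
Qed.

Lemma exp_le_compat x y : x <= y -> exp x <= exp y.
Proof. intro h. destruct (Rle_lt_or_eq_dec _ _ h) as [h'|<-]; [left; now apply exp_increasing | lra]. Qed.

Lemma weight_le k psi s hi : 0 < s <= hi -> 0 <= weight k psi s <= 2 * exp (psi ^ 2) * hi ^ (2 * k + 1).
Proof.
  intros hs. unfold weight. pose proof (exp_pos (- s ^ 2 + 2 * s * psi)).
  pose proof (pow_lt s (2 * k + 1) (proj1 hs)). split; [nra|].
  apply Rmult_le_compat; [lra | lra | |apply pow_incr; lra].
  apply Rmult_le_compat_l; [lra|]. apply exp_le_compat. pose proof (pow2_ge_0 (s - psi)). nra.
Qed.

(* On a compact subinterval of [(0, oo)] the system matrix is bounded, so Gronwall applies to [|g|^2]. *)
Lemma sysA_solution_eq_0 k n psi g : is_solution (sysA k n psi) g -> g 1 = (0, 0, 0) ->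
  forall t, 0 < t -> g t = (0, 0, 0).
Proof.
  intros hs h1 t ht. apply sqnorm3_eq_0.
  set (lo := Rmin t 1). set (hi := Rmax t 1).
  assert (hlo : 0 < lo) by (apply Rmin_glb_lt; lra).
  assert (hlt : lo <= t <= hi) by (split; [apply Rmin_l | apply Rmax_l]).
  assert (hl1 : lo <= 1 <= hi) by (split; [apply Rmin_r | apply Rmax_r]).
  set (W := 2 * exp (psi ^ 2) * hi ^ (2 * k + 1)).
  set (B := Rabs (4 * psi) + Rabs (2 * (INR n - 1)) * / lo).
  set (K := W + / lo + Rabs (- (2 * (2 * INR n - 1) * psi)) + 2 * B).
  set (E' s := 2 * (c1 (g s) * c1 (sysA k n psi s (g s)) + c2 (g s) * c2 (sysA k n psi s (g s))
                    + c3 (g s) * c3 (sysA k n psi s (g s)))).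
  apply (gronwall_zero (fun s => sqnorm3 (g s)) E' K lo hi 1 t hl1 hlt).
  - intros s hs'. apply has_derivative3_sqnorm3, hs. lra.
  - intros s hs'. assert (hs0 : 0 < s) by lra. unfold E', K, sqnorm3.
    rewrite sysA_eq by exact hs0. unfold c1 at 2, c2 at 2, c3 at 2; simpl.
    replace (- 2 * (2 * INR n - 1) * psi * c2 (g s) - (4 * psi + 2 * (INR n - 1) / s) * c3 (g s))
      with (- (2 * (2 * INR n - 1) * psi) * c2 (g s) + - (4 * psi + 2 * (INR n - 1) / s) * c3 (g s)) by ring.
    replace (c3 (g s) / s) with (/ s * c3 (g s)) by (field; lra).
    eapply Rle_trans; [apply abs_quadratic_form_le|].
    apply Rmult_le_compat_r; [pose proof (sqnorm3_nonneg (g s)); unfold sqnorm3 in *; lra|].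
    destruct (weight_le k psi s hi ltac:(lra)) as [hw0 hw].
    rewrite (Rabs_pos_eq (weight k psi s)) by exact hw0.
    rewrite (Rabs_pos_eq (/ s)) by (left; apply Rinv_0_lt_compat; lra).
    assert (hinv : / s <= / lo) by (apply Rinv_le_contravar; lra).
    assert (hb : Rabs (- (4 * psi + 2 * (INR n - 1) / s)) <= B).
    { unfold B. rewrite Rabs_Ropp. eapply Rle_trans; [apply Rabs_triang|]. apply Rplus_le_compat_l.
      unfold Rdiv. rewrite Rabs_mult, (Rabs_pos_eq (/ s)) by (left; apply Rinv_0_lt_compat; lra).
      apply Rmult_le_compat_l; [apply Rabs_pos | exact hinv]. }
    unfold W. lra.
  - apply sqnorm3_nonneg.
  - rewrite h1. unfold sqnorm3, c1, c2, c3; simpl. ring.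
Qed.

Section Asymptotics.
Variables (k n : nat) (psi : R) (g : R -> V3).
Hypothesis hn : (1 <= n)%nat.
Hypothesis hpsi : 0 < psi.
Hypothesis hg : is_solution (sysA k n psi) g.

Let a := 2 * (2 * INR n - 1) * psi.
Let b := 4 * psi.
Let c := 2 * (INR n - 1).
Let al := (2 * INR n - 1) / 2.
Let x t := c2 (g t).
Let y t := c3 (g t).
(* [y + al x] is the fast variable: it is damped at rate [b], and [b al = a]. *)
Let z t := y t + al * x t.

Let n_ge_1 : 1 <= INR n.
Proof. apply (le_INR 1 n) in hn. exact hn. Qed.

Let derive_x t : 0 < t -> derivable_pt_lim x t (y t / t).
Proof. intro ht. destruct (hg t ht) as [_ [hx _]]. rewrite sysA_eq in hx by exact ht. exact hx. Qed.

Let derive_y t : 0 < t -> derivable_pt_lim y t (- a * x t - (b + c / t) * y t).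
Proof.
  intro ht. destruct (hg t ht) as [_ [_ hy]]. rewrite sysA_eq in hy by exact ht.
  unfold a, b, c, x, y. simpl in hy.
  replace (- (2 * (2 * INR n - 1) * psi)) with (- 2 * (2 * INR n - 1) * psi) by ring.
  exact hy.
Qed.

(* [a x^2 + y^2 / t] is a Lyapunov function on [1, oo). *)
Lemma sysA_energy_bound : exists C0, 0 <= C0 /\ forall t, 1 <= t -> a * x t ^ 2 <= C0 /\ y t ^ 2 <= C0 * t.
Proof.
  set (E1 t := a * x t ^ 2 + y t ^ 2 * / t).
  assert (ha : 0 < a) by (unfold a; nra). assert (hb : 0 < b) by (unfold b; lra).
  assert (hc : 0 <= c) by (unfold c; lra).
  exists (E1 1). split.
  { unfold E1. pose proof (pow2_ge_0 (x 1)). pose proof (pow2_ge_0 (y 1)). rewrite Rinv_1. nra. }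
  intros t ht.
  assert (hm : E1 t <= E1 1).
  { apply (nonincreasing_of_derive_nonpos E1 (fun s => a * (2 * (y s / s) * x s)
      + (2 * (- a * x s - (b + c / s) * y s) * y s * / s + y s ^ 2 * (- / s ^ 2))) 1 t ht).
    - intros s hs. unfold E1. apply derivable_pt_lim_plus.
      + apply derivable_pt_lim_scal, derivable_pt_lim_sq, derive_x. lra.
      + apply (derivable_pt_lim_mult (fun s => y s ^ 2) (fun s => / s));
          [apply derivable_pt_lim_sq, derive_y; lra|].
        apply is_derive_Reals. auto_derive; [lra | field; lra].
    - intros s hs.
      replace (a * (2 * (y s / s) * x s)
               + (2 * (- a * x s - (b + c / s) * y s) * y s * / s + y s ^ 2 * (- / s ^ 2)))
        with (- (2 * b * s + 2 * c + 1) * (y s ^ 2 / s ^ 2)) by (field; lra).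
      assert (0 <= y s ^ 2 / s ^ 2) by (apply Rdiv_le_0_compat; [apply pow2_ge_0 | apply pow_lt; lra]).
      assert (0 <= 2 * b * s + 2 * c + 1) by nra. nra. }
  unfold E1 in *. split.
  - assert (0 <= y t ^ 2 * / t)
      by (apply Rmult_le_pos; [apply pow2_ge_0 | left; apply Rinv_0_lt_compat; lra]).
    lra.
  - assert (0 <= a * x t ^ 2) by (pose proof (pow2_ge_0 (x t)); nra).
    assert (hyt : y t ^ 2 * / t <= E1 1) by (unfold E1; lra).
    apply Rmult_le_compat_r with (r := t) in hyt; [|lra].
    replace (y t ^ 2 * / t * t) with (y t ^ 2) in hyt by (field; lra). unfold E1 in hyt. lra.
Qed.

Lemma sysA_c2_bounded : exists M, forall t, 1 <= t -> Rabs (x t) <= M.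
Proof.
  destruct sysA_energy_bound as [C0 [hC0 hC]].
  assert (ha : 0 < a) by (unfold a; nra).
  exists (1 + C0 / a). intros t ht. destruct (hC t ht) as [h _].
  assert (x t ^ 2 <= C0 / a).
  { apply Rmult_le_reg_l with a; [lra|]. replace (a * (C0 / a)) with C0 by (field; lra). lra. }
  assert (0 <= C0 / a) by (apply Rdiv_le_0_compat; lra).
  destruct (Rle_dec 0 (x t)); [rewrite Rabs_pos_eq by lra | rewrite Rabs_left by lra]; nra.
Qed.

Let derive_z t : 0 < t -> derivable_pt_lim z t (- b * z t + (al - c) * y t / t).
Proof.
  intro ht.
  replace (- b * z t + (al - c) * y t / t) with ((- a * x t - (b + c / t) * y t) + al * (y t / t))
    by (unfold z, a, b, al; field; lra).
  apply (derivable_pt_lim_plus y (fun s => al * x s)); [now apply derive_y|].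
  apply (derivable_pt_lim_scal x); now apply derive_x.
Qed.

Let z_sq_eventually_le eps : 0 < eps -> exists T, forall t, T < t -> z t ^ 2 <= eps.
Proof.
  intro he. destruct sysA_energy_bound as [C0 [hC0 hC]].
  assert (hb : 0 < b) by (unfold b; lra).
  set (be := al - c).
  set (T := Rmax 1 (4 * be ^ 2 * C0 / (b ^ 2 * eps))).
  assert (hT1 : 1 <= T) by apply Rmax_l.
  assert (hT2 : 4 * be ^ 2 * C0 / (b ^ 2 * eps) <= T) by apply Rmax_r.
  apply (eventually_le_of_derive_le_neg_inv (fun t => z t ^ 2)
    (fun t => 2 * (- b * z t + be * y t / t) * z t) T eps (b * eps)); [lra | nra | |].
  - intros t ht. apply derivable_pt_lim_sq, derive_z. lra.
  - intros t ht hz. assert (ht0 : 0 < t) by lra.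
    destruct (hC t ltac:(lra)) as [_ hy].
    (* the forcing term [be y / t] is [O(t^{-1/2})] and eventually dominated by [b z] *)
    assert (hu : (2 * be * y t / t) ^ 2 <= (b * z t) ^ 2).
    { replace ((2 * be * y t / t) ^ 2) with (4 * be ^ 2 * y t ^ 2 / t ^ 2) by (field; lra).
      assert (h1 : 4 * be ^ 2 * y t ^ 2 / t ^ 2 <= 4 * be ^ 2 * C0 / t).
      { unfold Rdiv. replace (4 * be ^ 2 * C0 * / t) with (4 * be ^ 2 * (C0 * t) * / t ^ 2) by (field; lra).
        apply Rmult_le_compat_r; [left; apply Rinv_0_lt_compat, pow_lt; lra|].
        apply Rmult_le_compat_l; [pose proof (pow2_ge_0 be); lra | exact hy]. }
      assert (h2 : 4 * be ^ 2 * C0 / t <= b ^ 2 * eps).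
      { apply Rmult_le_reg_r with t; [lra|].
        replace (4 * be ^ 2 * C0 / t * t) with (4 * be ^ 2 * C0) by (field; lra).
        assert (hTt : 4 * be ^ 2 * C0 / (b ^ 2 * eps) <= t) by lra.
        apply Rmult_le_compat_r with (r := b ^ 2 * eps) in hTt; [|nra].
        replace (4 * be ^ 2 * C0 / (b ^ 2 * eps) * (b ^ 2 * eps)) with (4 * be ^ 2 * C0) in hTt
          by (field; nra).
        nra. }
      assert (b ^ 2 * eps <= (b * z t) ^ 2) by (rewrite Rpow_mult_distr; apply Rmult_le_compat_l; nra).
      lra. }
    pose proof (mul_le_of_sq_le (2 * be * y t / t) (z t) b ltac:(lra) hu).
    assert (b * eps / t <= b * eps).
    { unfold Rdiv. rewrite <- (Rmult_1_r (b * eps)) at 2. apply Rmult_le_compat_l; [nra|].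
      rewrite <- Rinv_1. apply Rinv_le_contravar; lra. }
    replace (2 * (- b * z t + be * y t / t) * z t) with (- 2 * b * z t ^ 2 + 2 * be * y t / t * z t)
      by (field; lra).
    nra.
Qed.

Let x_sq_eventually_le eps : 0 < eps -> exists T, forall t, T < t -> x t ^ 2 <= eps.
Proof.
  intro he. assert (hal : 1 / 2 <= al) by (unfold al; lra).
  destruct (z_sq_eventually_le (al ^ 2 * eps / 4)) as [T1 hT1].
  { assert (0 < al ^ 2) by (apply pow_lt; lra). apply Rdiv_lt_0_compat; [apply Rmult_lt_0_compat|]; lra. }
  pose proof (Rmax_l 1 T1). pose proof (Rmax_r 1 T1).
  apply (eventually_le_of_derive_le_neg_inv (fun t => x t ^ 2) (fun t => 2 * (y t / t) * x t)
    (Rmax 1 T1) eps (al * eps)); [lra | nra | |].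
  - intros t ht. apply derivable_pt_lim_sq, derive_x. lra.
  - intros t ht hx. assert (ht0 : 0 < t) by lra.
    specialize (hT1 t ltac:(lra)).
    assert (hu : (2 * z t) ^ 2 <= (al * x t) ^ 2).
    { rewrite !Rpow_mult_distr.
      assert (al ^ 2 * eps <= al ^ 2 * x t ^ 2) by (apply Rmult_le_compat_l; nra). nra. }
    pose proof (mul_le_of_sq_le (2 * z t) (x t) al ltac:(lra) hu).
    replace (2 * (y t / t) * x t) with ((2 * z t * x t - 2 * al * x t ^ 2) / t) by (unfold z; field; lra).
    unfold Rdiv. apply Rmult_le_compat_r; [left; apply Rinv_0_lt_compat; lra | nra].
Qed.

Lemma sysA_c2_tends_to_0 : tends_to_at_infty x 0.
Proof. apply tends_to_at_infty_0_of_sq, x_sq_eventually_le. Qed.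

Lemma sysA_c3_tends_to_0 : tends_to_at_infty y 0.
Proof.
  apply tends_to_at_infty_0_of_sq. intros eps he. assert (hal : 1 / 2 <= al) by (unfold al; lra).
  destruct (z_sq_eventually_le (eps / 4)) as [T1 h1]; [lra|].
  destruct (x_sq_eventually_le (eps / (4 * al ^ 2))) as [T2 h2]; [apply Rdiv_lt_0_compat; nra|].
  exists (Rmax T1 T2). intros t ht. pose proof (Rmax_l T1 T2). pose proof (Rmax_r T1 T2).
  specialize (h1 t ltac:(lra)). specialize (h2 t ltac:(lra)).
  assert (hyz : y t = z t - al * x t) by (unfold z; ring). rewrite hyz.
  assert (al ^ 2 * x t ^ 2 <= eps / 4).
  { apply Rmult_le_compat_l with (r := al ^ 2) in h2; [|nra].
    replace (al ^ 2 * (eps / (4 * al ^ 2))) with (eps / 4) in h2 by (field; nra). exact h2. }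
  pose proof (pow2_ge_0 (z t + al * x t)). nra.
Qed.

End Asymptotics.

Lemma weight_le_exp k psi t : 0 < psi -> 2 * psi + 2 <= t ->
  0 <= weight k psi t <= 2 * INR (fact (2 * k + 1)) * exp (- t).
Proof.
  intros hp ht. unfold weight. pose proof (exp_pos (- t ^ 2 + 2 * t * psi)).
  pose proof (pow_lt t (2 * k + 1) ltac:(lra)). split; [nra|].
  pose proof (pow_le_fact_exp t (2 * k + 1) ltac:(lra)).
  apply Rle_trans with (2 * exp (- t ^ 2 + 2 * t * psi) * (INR (fact (2 * k + 1)) * exp t)); [nra|].
  replace (2 * exp (- t ^ 2 + 2 * t * psi) * (INR (fact (2 * k + 1)) * exp t))
    with (2 * INR (fact (2 * k + 1)) * exp (- t ^ 2 + 2 * t * psi + t)) by (rewrite exp_plus; ring).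
  pose proof (INR_fact_lt_0 (2 * k + 1)).
  apply Rmult_le_compat_l; [lra|]. apply exp_le_compat. nra.
Qed.

Lemma sysA_c1_converges k n psi g : (1 <= n)%nat -> 0 < psi -> is_solution (sysA k n psi) g ->
  exists L, tends_to_at_infty (fun t => c1 (g t)) L.
Proof.
  intros hn hp hg. destruct (sysA_c2_bounded k n psi g hn hp hg) as [M hM].
  set (K := 2 * INR (fact (2 * k + 1))).
  assert (hK : 0 <= K) by (pose proof (INR_fact_lt_0 (2 * k + 1)); unfold K; lra).
  assert (hM0 : 0 <= M) by (pose proof (hM 1 (Rle_refl 1)); pose proof (Rabs_pos (c2 (g 1))); lra).
  pose proof (Rmax_l 1 (2 * psi + 2)). pose proof (Rmax_r 1 (2 * psi + 2)).
  apply (tends_to_at_infty_of_derive_le_exp _ (fun t => weight k psi t * c2 (g t))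
    (Rmax 1 (2 * psi + 2)) (K * M)); [nra| |].
  - intros t ht. destruct (hg t ltac:(lra)) as [h1 _]. rewrite sysA_eq in h1 by lra. exact h1.
  - intros t ht. destruct (weight_le_exp k psi t hp ltac:(lra)) as [hw0 hw].
    specialize (hM t ltac:(lra)). rewrite Rabs_mult, (Rabs_pos_eq (weight k psi t)) by lra.
    pose proof (Rabs_pos (c2 (g t))). pose proof (exp_pos (- t)). fold K in hw.
    apply Rle_trans with (K * exp (- t) * M); [apply Rmult_le_compat; lra | nra].
Qed.

Lemma norm3_bounds u : Rabs (c1 u) <= norm3 u <= Rabs (c1 u) + Rabs (c2 u) + Rabs (c3 u).
Proof.
  unfold norm3. pose proof (Rabs_pos (c1 u)). pose proof (Rabs_pos (c2 u)). pose proof (Rabs_pos (c3 u)).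
  split.
  - rewrite <- sqrt_Rsqr_abs. apply sqrt_le_1_alt. unfold Rsqr.
    pose proof (pow2_ge_0 (c2 u)). pose proof (pow2_ge_0 (c3 u)). simpl. nra.
  - rewrite <- (sqrt_pow2 (Rabs (c1 u) + Rabs (c2 u) + Rabs (c3 u))) by lra.
    apply sqrt_le_1_alt. rewrite <- (pow2_abs (c1 u)), <- (pow2_abs (c2 u)), <- (pow2_abs (c3 u)). nra.
Qed.

Lemma sysA_norm3_tends_to k n psi g : (1 <= n)%nat -> 0 < psi -> is_solution (sysA k n psi) g ->
  exists L, tends_to_at_infty (fun t => c1 (g t)) L /\ tends_to_at_infty (fun t => norm3 (g t)) (Rabs L).
Proof.
  intros hn hp hg. destruct (sysA_c1_converges k n psi g hn hp hg) as [L h1].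
  pose proof (sysA_c2_tends_to_0 k n psi g hn hp hg) as h2.
  pose proof (sysA_c3_tends_to_0 k n psi g hn hp hg) as h3.
  exists L. split; [exact h1|]. intros eps he.
  destruct (h1 (eps / 3) ltac:(lra)) as [T1 hT1]. destruct (h2 (eps / 3) ltac:(lra)) as [T2 hT2].
  destruct (h3 (eps / 3) ltac:(lra)) as [T3 hT3].
  exists (Rmax T1 (Rmax T2 T3)). intros t ht.
  pose proof (Rmax_l T1 (Rmax T2 T3)). pose proof (Rmax_r T1 (Rmax T2 T3)).
  pose proof (Rmax_l T2 T3). pose proof (Rmax_r T2 T3).
  specialize (hT1 t ltac:(lra)). specialize (hT2 t ltac:(lra)). specialize (hT3 t ltac:(lra)).
  rewrite Rminus_0_r in hT2, hT3.
  pose proof (norm3_bounds (g t)).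
  pose proof (Rabs_triang_inv (c1 (g t)) L) as hi1. pose proof (Rabs_triang_inv L (c1 (g t))) as hi2.
  rewrite Rabs_minus_sym in hi2. apply Rabs_def1; lra.
Qed.

Lemma deriv_eq (f : R -> R) x l : derivable_pt_lim f x l -> deriv f x = l.
Proof.
  intro h. apply (uniqueness_limite f x); [|exact h].
  apply (epsilon_spec (inhabits 0) (fun l => derivable_pt_lim f x l)). now exists l.
Qed.

Lemma integral_eq_RInt (f : R -> R) a b : ex_RInt f a b -> integral f a b = RInt f a b.
Proof.
  intro hex. pose proof (ex_RInt_Reals_0 _ _ _ hex) as pr.
  assert (hP : exists l, exists pr : Riemann_integrable f a b, RiemannInt pr = l)
    by (exists (RiemannInt pr), pr; reflexivity).
  unfold integral.
  destruct (epsilon_spec (inhabits 0) (fun l => exists pr : Riemann_integrable f a b, RiemannInt pr = l) hP)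
    as [pr' <-].
  symmetry. apply RInt_Reals.
Qed.

Section ExplicitSolutions.
Variables (k n : nat) (psi : R).
Hypothesis hn : (1 <= n)%nat.

Let p := INR n.
Let p_pos : 0 < p.
Proof. unfold p. apply (le_INR 1 n) in hn. simpl in hn. lra. Qed.

Definition vfun' (t : R) : R :=
  exp (- 2 * t * psi) * (- 2 * psi * F01 p (t ^ 2 * psi ^ 2) + 2 * t * psi ^ 2 * F01' p (t ^ 2 * psi ^ 2)).
Definition vfun'' (t : R) : R :=
  exp (- 2 * t * psi) * (4 * psi ^ 2 * F01 p (t ^ 2 * psi ^ 2) - 8 * t * psi ^ 3 * F01' p (t ^ 2 * psi ^ 2)
    + 2 * psi ^ 2 * F01' p (t ^ 2 * psi ^ 2) + 4 * t ^ 2 * psi ^ 4 * F01'' p (t ^ 2 * psi ^ 2)).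

Lemma is_derive_vfun t : is_derive (vfun n psi) t (vfun' t).
Proof.
  unfold vfun, vfun'. fold p. auto_derive.
  - exists (F01' p (t ^ 2 * psi ^ 2)). now apply is_derive_F01.
  - replace (t * (t * 1) * (psi * (psi * 1))) with (t ^ 2 * psi ^ 2) by ring.
    change (Derive (fun x => F01 p x)) with (Derive (F01 p)).
    rewrite (is_derive_unique _ _ _ (is_derive_F01 p (t ^ 2 * psi ^ 2) p_pos)). ring.
Qed.

Lemma is_derive_vfun' t : is_derive vfun' t (vfun'' t).
Proof.
  unfold vfun', vfun''. auto_derive.
  - split; [exists (F01' p (t ^ 2 * psi ^ 2)); now apply is_derive_F01|].
    split; [|exact I]. exists (F01'' p (t ^ 2 * psi ^ 2)). now apply is_derive_F01'.
  - replace (t * (t * 1) * (psi * (psi * 1))) with (t ^ 2 * psi ^ 2) by ring.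
    change (Derive (fun x => F01 p x)) with (Derive (F01 p)).
    change (Derive (fun x => F01' p x)) with (Derive (F01' p)).
    rewrite (is_derive_unique _ _ _ (is_derive_F01 p (t ^ 2 * psi ^ 2) p_pos)).
    rewrite (is_derive_unique _ _ _ (is_derive_F01' p (t ^ 2 * psi ^ 2) p_pos)). ring.
Qed.

Lemma vfun_ode t : 0 < t -> vfun'' t + ((2 * INR n - 1) / t + 4 * psi) * vfun' t
                           + 2 * (2 * INR n - 1) * psi / t * vfun n psi t = 0.
Proof.
  intro ht. unfold vfun, vfun', vfun''. fold p.
  rewrite <- (F01_ode p (t ^ 2 * psi ^ 2) p_pos). field. lra.
Qed.

Lemma vfun_pos t : 0 < vfun n psi t.
Proof.
  unfold vfun. apply Rmult_lt_0_compat; [apply exp_pos|].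
  assert (0 <= t ^ 2 * psi ^ 2) by (apply Rmult_le_pos; apply pow2_ge_0).
  pose proof (F01_ge_1 (INR n) (t ^ 2 * psi ^ 2) p_pos ltac:(lra)). lra.
Qed.

Definition Hkn_integrand (y : R) : R := y ^ k * exp (- y) * F01 p (psi ^ 2 * y).

Lemma continuous_Hkn_integrand y : continuous Hkn_integrand y.
Proof.
  apply (@ex_derive_continuous R_AbsRing R_NormedModule). unfold Hkn_integrand. auto_derive.
  exists (F01' p (psi ^ 2 * y)). now apply is_derive_F01.
Qed.

Lemma Hkn_integrand_pos y : 0 < y -> 0 < Hkn_integrand y.
Proof.
  intro hy. unfold Hkn_integrand.
  assert (0 <= psi ^ 2 * y) by (apply Rmult_le_pos; [apply pow2_ge_0 | lra]).
  pose proof (F01_ge_1 p (psi ^ 2 * y) p_pos ltac:(lra)). pose proof (exp_pos (- y)).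
  pose proof (pow_lt y k hy). apply Rmult_lt_0_compat; [apply Rmult_lt_0_compat|]; lra.
Qed.

Lemma gsol_eq t : gsol k n psi t = (RInt Hkn_integrand 0 (t ^ 2), vfun n psi t, t * vfun' t).
Proof.
  unfold gsol, Hkn, theta. rewrite integral_eq_RInt.
  - rewrite (deriv_eq _ _ _ (proj1 (is_derive_Reals _ _ _) (is_derive_vfun t))). reflexivity.
  - apply (@ex_RInt_continuous R_CompleteNormedModule). intros; apply continuous_Hkn_integrand.
Qed.

(* [e^{-t^2} = e^{-t^2 + 2 t psi} e^{-2 t psi}] turns [2 t H'(t^2)] into [weight * v]. *)
Lemma is_derive_Hkn_sq t :
  is_derive (fun t => RInt Hkn_integrand 0 (t ^ 2)) t (weight k psi t * vfun n psi t).
Proof.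
  replace (weight k psi t * vfun n psi t) with (2 * t * Hkn_integrand (t ^ 2)).
  - apply (is_derive_comp (fun x => RInt Hkn_integrand 0 x) (fun t => t ^ 2)).
    + apply is_derive_RInt_continuous, continuous_Hkn_integrand.
    + auto_derive; auto; ring.
  - unfold Hkn_integrand, weight, vfun. fold p.
    replace (psi ^ 2 * t ^ 2) with (t ^ 2 * psi ^ 2) by ring.
    replace (- t ^ 2) with (- t ^ 2 + 2 * t * psi + - 2 * t * psi) at 1 by ring.
    rewrite (exp_plus (- t ^ 2 + 2 * t * psi)), <- pow_mult.
    replace (2 * k + 1)%nat with (S (2 * k)) by lia. simpl pow. ring.
Qed.

Lemma is_solution_gsol : is_solution (sysA k n psi) (gsol k n psi).
Proof.
  replace (gsol k n psi) with (fun t => (RInt Hkn_integrand 0 (t ^ 2), vfun n psi t, t * vfun' t))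
    by (apply functional_extensionality; intro; now rewrite gsol_eq).
  apply is_solution_sysA_of_ode with (v'' := vfun'').
  - intros t _. apply is_derive_Hkn_sq.
  - intros t _. apply is_derive_vfun.
  - intros t _. apply is_derive_vfun'.
  - apply vfun_ode.
Qed.

(* Reduction of order: [v2 = v Q] with [Q' = W / v^2], where [W] is the Wronskian given by Abel's formula. *)
Definition wronskian (s : R) : R := exp (- 4 * psi * s - (2 * INR n - 1) * ln s).
Definition wronskian' (s : R) : R := - 4 * psi * wronskian s - (2 * INR n - 1) * wronskian s / s.

Lemma is_derive_wronskian s : 0 < s -> is_derive wronskian s (wronskian' s).
Proof. intro hs. unfold wronskian', wronskian. auto_derive; [exact hs | unfold Rminus; field; lra]. Qed.

Definition order_reduction_integrand (s : R) : R := wronskian s / vfun n psi s ^ 2.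
Definition order_reduction (t : R) : R := RInt order_reduction_integrand 1 t.

Lemma is_derive_order_reduction t : 0 < t -> is_derive order_reduction t (order_reduction_integrand t).
Proof.
  intro ht. apply is_derive_RInt_pos; [|lra|exact ht].
  intros s hs. apply (@ex_derive_continuous R_AbsRing R_NormedModule).
  unfold order_reduction_integrand. auto_derive. repeat split.
  - eexists; now apply is_derive_wronskian.
  - eexists; apply is_derive_vfun.
  - pose proof (vfun_pos s). apply Rmult_integral_contrapositive_currified; nra.
Qed.

Definition vfun2 (t : R) : R := vfun n psi t * order_reduction t.
Definition vfun2' (t : R) : R := vfun' t * order_reduction t + wronskian t / vfun n psi t.
Definition vfun2'' (t : R) : R := vfun'' t * order_reduction t + wronskian' t / vfun n psi t.

Lemma is_derive_vfun2 t : 0 < t -> is_derive vfun2 t (vfun2' t).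
Proof.
  intro ht. pose proof (vfun_pos t).
  assert (hd : is_derive vfun2 t (plus (mult (vfun' t) (order_reduction t))
                                       (mult (vfun n psi t) (order_reduction_integrand t)))).
  { apply (is_derive_mult (vfun n psi) order_reduction);
      [apply is_derive_vfun | now apply is_derive_order_reduction |].
    intros; apply Rmult_comm. }
  unfold vfun2'. unfold plus, mult, order_reduction_integrand in hd; simpl in hd.
  replace (wronskian t / vfun n psi t) with (vfun n psi t * (wronskian t / vfun n psi t ^ 2)) by (field; lra).
  exact hd.
Qed.

Lemma is_derive_vfun2' t : 0 < t -> is_derive vfun2' t (vfun2'' t).
Proof.
  intro ht. pose proof (vfun_pos t).
  assert (hd : is_derive vfun2' t (plus (plus (mult (vfun'' t) (order_reduction t))
                                              (mult (vfun' t) (order_reduction_integrand t)))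
      ((wronskian' t * vfun n psi t - wronskian t * vfun' t) / vfun n psi t ^ 2))).
  { apply (@is_derive_plus R_AbsRing R_NormedModule (fun t => vfun' t * order_reduction t)
      (fun t => wronskian t / vfun n psi t)).
    - apply (is_derive_mult vfun' order_reduction);
        [apply is_derive_vfun' | now apply is_derive_order_reduction |].
      intros; apply Rmult_comm.
    - apply is_derive_div; [now apply is_derive_wronskian | apply is_derive_vfun | lra]. }
  unfold plus, mult, order_reduction_integrand in hd; simpl in hd.
  unfold vfun2''. replace (vfun'' t * order_reduction t + wronskian' t / vfun n psi t) with
    (vfun'' t * order_reduction t + vfun' t * (wronskian t / vfun n psi t ^ 2) +
     (wronskian' t * vfun n psi t - wronskian t * vfun' t) / vfun n psi t ^ 2) by (field; lra).
  exact hd.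
Qed.

Lemma vfun2_ode t : 0 < t -> vfun2'' t + ((2 * INR n - 1) / t + 4 * psi) * vfun2' t
                            + 2 * (2 * INR n - 1) * psi / t * vfun2 t = 0.
Proof.
  intro ht. pose proof (vfun_ode t ht) as h. pose proof (vfun_pos t).
  unfold vfun2'', vfun2', vfun2, wronskian'.
  replace (vfun'' t * order_reduction t + (- 4 * psi * wronskian t - (2 * INR n - 1) * wronskian t / t) / vfun n psi t
      + ((2 * INR n - 1) / t + 4 * psi) * (vfun' t * order_reduction t + wronskian t / vfun n psi t)
      + 2 * (2 * INR n - 1) * psi / t * (vfun n psi t * order_reduction t))
    with (order_reduction t * (vfun'' t + ((2 * INR n - 1) / t + 4 * psi) * vfun' t
      + 2 * (2 * INR n - 1) * psi / t * vfun n psi t)) by (field; lra).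
  rewrite h. ring.
Qed.

Definition gsol2 (t : R) : V3 :=
  (RInt (fun s => weight k psi s * vfun2 s) 1 t, vfun2 t, t * vfun2' t).

Lemma is_solution_gsol2 : is_solution (sysA k n psi) gsol2.
Proof.
  apply is_solution_sysA_of_ode with (v'' := vfun2'').
  - intros t ht. apply (is_derive_RInt_pos (fun s => weight k psi s * vfun2 s)); [|lra|exact ht].
    intros s hs. apply (@ex_derive_continuous R_AbsRing R_NormedModule).
    apply (ex_derive_mult (fun s => weight k psi s) vfun2).
    + unfold weight. auto_derive. exact I.
    + eexists; now apply is_derive_vfun2.
  - exact is_derive_vfun2.
  - exact is_derive_vfun2'.
  - exact vfun2_ode.
Qed.

Lemma gsol2_1 : gsol2 1 = (0, 0, wronskian 1 / vfun n psi 1).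
Proof.
  unfold gsol2, vfun2', vfun2, order_reduction. rewrite !RInt_point. change (zero : R) with 0.
  f_equal; [f_equal|]; ring.
Qed.


End ExplicitSolutions.

Lemma tends_to_at_infty_ge (f : R -> R) L m T0 :
  tends_to_at_infty f L -> (forall t, T0 <= t -> m <= f t) -> m <= L.
Proof.
  intros hf hm. apply Rnot_lt_le. intro hL.
  destruct (hf (m - L) ltac:(lra)) as [T hT].
  set (t := Rmax T T0 + 1). pose proof (Rmax_l T T0). pose proof (Rmax_r T T0).
  specialize (hT t ltac:(unfold t; lra)). specialize (hm t ltac:(unfold t; lra)).
  apply Rabs_def2 in hT. lra.
Qed.

Lemma tends_to_at_infty_div f g Lf Lg : tends_to_at_infty f Lf -> tends_to_at_infty g Lg -> Lg <> 0 ->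
  tends_to_at_infty (fun t => f t / g t) (Lf / Lg).
Proof.
  intros hf hg hLg. apply is_lim_tends_to_at_infty.
  pose proof (is_lim_div _ _ p_infty _ _ (tends_to_at_infty_is_lim _ _ hf)
    (tends_to_at_infty_is_lim _ _ hg)) as h.
  apply h; [intro hc; injection hc; exact hLg | exact I].
Qed.

(* [H^k_n(t^2, psi^2)] increases in [t] from a positive value at [t = 1]. *)
Lemma gsol_c1_limit_pos k n psi L : (1 <= n)%nat ->
  tends_to_at_infty (fun t => c1 (gsol k n psi t)) L -> 0 < L.
Proof.
  intros hn hL.
  assert (hex : forall a b, ex_RInt (Hkn_integrand k n psi) a b).
  { intros a b. apply (@ex_RInt_continuous R_CompleteNormedModule). intros; now apply continuous_Hkn_integrand. }
  assert (h01 : 0 < RInt (Hkn_integrand k n psi) 0 1).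
  { apply RInt_gt_0; [lra | intros; apply (Hkn_integrand_pos k n psi hn); lra |].
    intros; now apply continuous_Hkn_integrand. }
  enough (RInt (Hkn_integrand k n psi) 0 1 <= L) by lra.
  apply (tends_to_at_infty_ge _ L _ 1 hL). intros t ht.
  rewrite gsol_eq by exact hn. unfold c1. cbn [fst snd].
  assert (hc : RInt (Hkn_integrand k n psi) 0 (t ^ 2)
               = RInt (Hkn_integrand k n psi) 0 1 + RInt (Hkn_integrand k n psi) 1 (t ^ 2))
    by (symmetry; apply (RInt_Chasles (Hkn_integrand k n psi)); apply hex).
  rewrite hc. enough (0 <= RInt (Hkn_integrand k n psi) 1 (t ^ 2)) by lra.
  apply RInt_ge_0; [nra | apply hex | intros; left; apply (Hkn_integrand_pos k n psi hn); lra].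
Qed.

Lemma sysA_norm_ratio_converges k n psi f : (1 <= n)%nat -> 0 < psi -> is_solution (sysA k n psi) f ->
  finite_limit_at_infty (fun t => norm3 (f t) / norm3 (gsol k n psi t)).
Proof.
  intros hn hpsi hf.
  destruct (sysA_norm3_tends_to k n psi f hn hpsi hf) as [Lf [_ hnf]].
  destruct (sysA_norm3_tends_to k n psi _ hn hpsi (is_solution_gsol k n psi hn)) as [Lg [hcg hng]].
  pose proof (gsol_c1_limit_pos k n psi Lg hn hcg).
  exists (Rabs Lf / Rabs Lg). apply tends_to_at_infty_div; [exact hnf | exact hng |].
  rewrite Rabs_pos_eq; lra.
Qed.

Definition sysA_basis k n psi (M : R) (i : nat) : R -> V3 :=
  match i with
  | 0%nat => fun _ => (M, 0, 0)
  | 1%nat => gsol k n psi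
  | _ => gsol2 k n psi
  end.

Lemma lin3_sub_eq_0 u v : lin3 1 (-1) 0 u v u = (0, 0, 0) -> u = v.
Proof.
  destruct u as [[a b] c], v as [[d e] f]. unfold lin3, c1, c2, c3; simpl. intro h.
  injection h; intros. f_equal; [f_equal|]; lra.
Qed.

Lemma is_basis_sysA_basis k n psi M : (1 <= n)%nat -> M <> 0 ->
  is_basis (sysA k n psi) (sysA_basis k n psi M).
Proof.
  intros hn hM.
  assert (hsol : forall i, is_solution (sysA k n psi) (sysA_basis k n psi M i)).
  { intros [|[|i]]; simpl;
      [apply is_solution_sysA_const | now apply is_solution_gsol | now apply is_solution_gsol2]. }
  pose proof (vfun_pos n psi hn 1) as hv. assert (hW : 0 < wronskian n psi 1) by apply exp_pos.
  assert (hw : 0 < wronskian n psi 1 / vfun n psi 1) by (apply Rdiv_lt_0_compat; lra).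
  set (G1 := RInt (Hkn_integrand k n psi) 0 1).
  assert (hval : forall a b c, lin3 a b c (sysA_basis k n psi M 0 1) (sysA_basis k n psi M 1 1)
      (sysA_basis k n psi M 2 1)
    = (a * M + b * G1, b * vfun n psi 1, b * vfun' n psi 1 + c * (wronskian n psi 1 / vfun n psi 1))).
  { intros a b c. simpl. rewrite gsol_eq, gsol2_1 by exact hn. unfold lin3, c1, c2, c3, G1; simpl.
    replace (1 * (1 * 1)) with 1 by ring.
    f_equal; [f_equal|]; ring. }
  split; [|split].
  - intros i _; apply hsol.
  - intros a b c hz. specialize (hz 1 Rlt_0_1). rewrite hval in hz. injection hz as h1 h2 h3.
    assert (b = 0) by (apply (Rmult_eq_reg_r (vfun n psi 1)); lra). subst b.
    assert (c = 0) by (apply (Rmult_eq_reg_r (wronskian n psi 1 / vfun n psi 1)); lra). subst c.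
    assert (a = 0) by (apply (Rmult_eq_reg_r M); lra). auto.
  - (* match the initial values at [t = 1]; uniqueness does the rest *)
    intros g hg.
    set (b := c2 (g 1) / vfun n psi 1).
    set (c := (c3 (g 1) - b * vfun' n psi 1) / (wronskian n psi 1 / vfun n psi 1)).
    set (a := (c1 (g 1) - b * G1) / M).
    exists a, b, c. intros t ht. apply lin3_sub_eq_0.
    revert t ht. apply (sysA_solution_eq_0 k n psi (fun t => lin3 1 (-1) 0 (g t)
      (lin3 a b c (sysA_basis k n psi M 0 t) (sysA_basis k n psi M 1 t) (sysA_basis k n psi M 2 t)) (g t))).
    + apply (is_solution_lin3 _ 1 (-1) 0); [apply sysA_lin3 | exact hg | | exact hg].
      apply is_solution_lin3; [apply sysA_lin3 | apply hsol..].
    + rewrite hval. unfold lin3, a, c, b, G1, c1, c2, c3; simpl.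
      f_equal; [f_equal|]; field; lra.
Qed.

Lemma norm3_eventually_le k n psi f : (1 <= n)%nat -> 0 < psi -> is_solution (sysA k n psi) f ->
  exists B T, 0 <= B /\ forall t, T < t -> norm3 (f t) <= B.
Proof.
  intros hn hpsi hf. destruct (sysA_norm3_tends_to k n psi f hn hpsi hf) as [L [_ hL]].
  destruct (hL 1 Rlt_0_1) as [T hT]. exists (Rabs L + 1), T. split; [pose proof (Rabs_pos L); lra|].
  intros t ht. specialize (hT t ht). apply Rabs_def2 in hT. lra.
Qed.

Lemma sysA_basis_dominant k n psi : (1 <= n)%nat -> 0 < psi ->
  exists M, M <> 0 /\ dominant (sysA_basis k n psi M) 0.
Proof.
  intros hn hpsi.
  destruct (norm3_eventually_le k n psi _ hn hpsi (is_solution_gsol k n psi hn)) as [B1 [T1 [hB1 h1]]].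
  destruct (norm3_eventually_le k n psi _ hn hpsi (is_solution_gsol2 k n psi hn)) as [B2 [T2 [hB2 h2]]].
  exists (B1 + B2 + 1). split; [lra|].
  exists (Rmax T1 T2). intros t ht j hj. pose proof (Rmax_l T1 T2). pose proof (Rmax_r T1 T2).
  assert (hn0 : norm3 (sysA_basis k n psi (B1 + B2 + 1) 0 t) = B1 + B2 + 1).
  { unfold norm3, c1, c2, c3; simpl.
    replace ((B1 + B2 + 1) * ((B1 + B2 + 1) * 1) + 0 * (0 * 1) + 0 * (0 * 1)) with ((B1 + B2 + 1) ^ 2) by ring.
    apply sqrt_pow2; lra. }
  rewrite hn0. destruct j as [|[|[|j]]]; [lra | | | lia].
  - specialize (h1 t ltac:(lra)). simpl. lra.
  - specialize (h2 t ltac:(lra)). simpl. lra.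
Qed.

Theorem theorem5 (k n : nat) (hn : (1 <= n)%nat) (psi : R) (hpsi : 0 < psi) :
  stabile (sysA k n psi) (gsol k n psi).
Proof.
  split.
  - destruct (sysA_basis_dominant k n psi hn hpsi) as [M [hM hdom]].
    exists (sysA_basis k n psi M), 0%nat.
    split; [now apply is_basis_sysA_basis | split; [lia | exact hdom]].
  - intros fb i [hsol _] hi _. now apply sysA_norm_ratio_converges, hsol.
Qed.
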